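(* On the $L\times L$ qubit grid, define $$C_{2D}=U^\dagger C_Z U,\qquad U=C_\leftarrow C_\uparrow,\qquad C_Z=\prod_{c=0}^{L-1}\prod_{r=0}^{L-2}\mathrm{CZ}_{(r,c),(r+1,c)},$$ and $W=\Bigl(\prod_{r\text{ odd}}\prod_{c}Z_{(r,c)}\Bigr)C_{2D}$. Then $W$ maps the JW encoding with ordering $m_Z$ to the JW encoding with ordering $m_S$, and also maps the JW encoding with ordering $m_S$ to that with ordering $m_Z$. In particular, $W$ consists of $\mathcal O(N)$ nearest-neighbour CNOT/CZ gates and single-qubit $Z$ gates and has depth $\mathcal O(L)=\mathcal O(\sqrt N)$ on the nearest-neighbour square lattice, $N=L^2$.
   Context: Qubits sit on the grid $\{0,\dots,L-1\}^2$ (sites $(r,c)$, row $r$, column $c$), with nearest-neighbour connectivity (two-qubit gates only between sites at $\ell_1$-distance 1). Fermionic mode $j$ is identified with qubit $j$. A canonical ordering is a bijection $m$ from sites to $\{0,\dots,N-1\}$; the JW encoding with ordering $m$ has Majoranas $\chi^{(m)}_{2j}=X_j\prod_{k:m(k)<m(j)}Z_k$, $\chi^{(m)}_{2j+1}=Y_j\prod_{k:m(k)<m(j)}Z_k$, and a unitary $W$ maps the encoding with ordering $m$ to that with $m'$ if $W\chi^{(m)}_aW^\dagger=\chi^{(m')}_a$ for all $a$. The orderings are $m_Z(r,c)=Lc+(L-1-r)$ and $m_S(r,c)=Lr+c$ for $r$ even, $m_S(r,c)=Lr+(L-1-c)$ for $r$ odd. $x_{(r,c)}$ is the computational-basis bit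 of qubit $(r,c)$. $C_\uparrow$ is the CNOT circuit (CNOT ladders along columns, gates $\mathrm{CNOT}_{(r+1,c)\to(r,c)}$ in order of decreasing $r$) acting by $x_{(r,c)}\mapsto\bigoplus_{r'\ge r}x_{(r',c)}$; $C_\leftarrow$ is the CNOT circuit (ladders along even rows, gates $\mathrm{CNOT}_{(r,c+1)\to(r,c)}$ in order of decreasing $c$) acting by $x_{(r,c)}\mapsto\bigoplus_{c'\ge c}x_{(r,c')}$ for even $r$ and trivially on odd rows. *)

From mathcomp Require Import all_boot all_order all_algebra.
From mathcomp Require Import algC.
Set Implicit Arguments. Unset Strict Implicit. Unset Printing Implicit Defensive.
Import Order.TTheory GRing.Theory Num.Theory.
Local Open Scope ring_scope.

(* sites (r, c) : row r, column c *)
Definition site (L : nat) := ('I_L * 'I_L)%type.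
Definition basis (L : nat) := {ffun site L -> bool}.
(* operators = matrices  A x y = <x| A |y> *)
Definition op (L : nat) := basis L -> basis L -> algC.

Definition mulop L (A B : op L) : op L :=
  fun x y => \sum_(z : basis L) A x z * B z y.
Definition idop L : op L := fun x y => (x == y)%:R.
Arguments idop L : clear implicits.
Definition adj L (A : op L) : op L := fun x y => (A y x)^*.

Definition setbit L (y : basis L) (j : site L) (b : bool) : basis L :=
  [ffun k => if k == j then b else y k].

Definition Xop L (j : site L) : op L :=
  fun x y => (x == setbit y j (~~ y j))%:R.
Definition Yop L (j : site L) : op L :=
  fun x y => (x == setbit y j (~~ y j))%:R * (if y j then - 'i else 'i).
Definition Zop L (j : site L) : op L :=
  fun x y => (x == y)%:R * (-1) ^+ (y j).

Definition CNOTop L (c t : site L) : op L :=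
  fun x y => (x == setbit y t (y t (+) y c))%:R.
Definition CZop L (a b : site L) : op L :=
  fun x y => (x == y)%:R * (-1) ^+ (y a && y b).

Definition permop L (f : basis L -> basis L) : op L :=
  fun x y => (x == f y)%:R.

Definition mZ L (s : site L) : nat := (L * s.2 + (L.-1 - s.1))%N.
Definition mS L (s : site L) : nat :=
  (if ~~ odd s.1 then L * s.1 + s.2 else L * s.1 + (L.-1 - s.2))%N.

(* JW Majoranas: chi_(2j) (b = false) and chi_(2j+1) (b = true) *)
Definition JW L (m : site L -> nat) (j : site L) (b : bool) : op L :=
  mulop (if b then Yop j else Xop j)
        (\big[@mulop L/idop L]_(k : site L | (m k < m j)%N) Zop k).

Definition maps_encoding L (W : op L) (m m' : site L -> nat) : Prop :=
  forall (j : site L) (b : bool),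
    mulop (mulop W (JW m j b)) (adj W) = JW m' j b.

Definition Cup_map L (x : basis L) : basis L :=
  [ffun s : site L => \big[addb/false]_(t : site L | (t.2 == s.2) && (s.1 <= t.1)%N) x t].
Definition Cleft_map L (x : basis L) : basis L :=
  [ffun s : site L => if odd s.1 then x s else
     \big[addb/false]_(t : site L | (t.1 == s.1) && (s.2 <= t.2)%N) x t].

Definition Cup L : op L := permop (fun x : basis L => Cup_map x).
Arguments Cup L : clear implicits.
Definition Cleft L : op L := permop (fun x : basis L => Cleft_map x).
Arguments Cleft L : clear implicits.
Definition Uop L : op L := mulop (Cleft L) (Cup L).
Arguments Uop L : clear implicits.
Definition CZlayer L : op L :=
  \big[@mulop L/idop L]_(a : site L)
    \big[@mulop L/idop L]_(b : site L | (b.2 == a.2) && (val b.1 == (val a.1).+1))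
      CZop a b.
Arguments CZlayer L : clear implicits.
Definition C2D L : op L := mulop (mulop (adj (Uop L)) (CZlayer L)) (Uop L).
Arguments C2D L : clear implicits.
Definition Zodd L : op L := \big[@mulop L/idop L]_(a : site L | odd a.1) Zop a.
Arguments Zodd L : clear implicits.
Definition Wop L : op L := mulop (Zodd L) (C2D L).
Arguments Wop L : clear implicits.

Inductive gate (L : nat) :=
| GCNOT of site L & site L   (* control, target *)
| GCZ of site L & site L
| GZ of site L.

Definition adjacent L (a b : site L) : bool :=
  (`|(val a.1)%:Z - (val b.1)%:Z|%N + `|(val a.2)%:Z - (val b.2)%:Z|%N == 1)%N.

Definition gate_op L (g : gate L) : op L :=
  match g with GCNOT c t => CNOTop c t | GCZ a b => CZop a b | GZ a => Zop a end.
Definition gate_support L (g : gate L) : seq (site L) :=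
  match g with GCNOT c t => [:: c; t] | GCZ a b => [:: a; b] | GZ a => [:: a] end.
Definition gate_ok L (g : gate L) : bool :=
  match g with GCNOT c t => adjacent c t | GCZ a b => adjacent a b | GZ _ => true end.

Definition layer_ok L (l : seq (gate L)) : bool :=
  all (@gate_ok L) l && uniq (flatten (map (@gate_support L) l)).
Definition layer_op L (l : seq (gate L)) : op L :=
  \big[@mulop L/idop L]_(g <- l) gate_op g.
(* a circuit is a sequence of layers, applied in order (first layer first) *)
Definition circuit_op L (ls : seq (seq (gate L))) : op L :=
  foldl (fun acc l => mulop (layer_op l) acc) (idop L) ls.
Definition circuit_size L (ls : seq (seq (gate L))) : nat := sumn (map size ls).

(* W = Z_odd U^-1 C_Z U is diagonal: U = C_left C_up is a linear bijection of the
   basis states over GF(2), so W |y> = (-1)^(Wsign y) |y> with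
   Wsign y = sum of the y_s on odd rows + Q(U y), Q(u) = sum of u_s u_t over vertically
   adjacent s, t.  A Majorana is a bit flip at j times a sign given by the parity of y
   on the JW prefix of j, and conjugation by W multiplies it by
   (-1)^(Wsign (y + e_j) + Wsign y).  Because U is linear and Q quadratic this
   difference is affine in y: its constant part is the parity of the row of j, which
   the Z gates on odd rows cancel, and its linear part is the sum of the prefix
   parities for m_Z and m_S, which exchanges the two JW strings.  C_up and C_left are
   L - 1 layers of parallel nearest-neighbour CNOTs each, C_Z is two layers of CZs and
   Z_odd is one layer of Z gates. *)

From mathcomp Require Import all_boot all_order all_algebra.
From mathcomp Require Import algC.
From mathcomp Require Import zify.
From Stdlib Require Import FunctionalExtensionality.
Set Implicit Arguments. Unset Strict Implicit. Unset Printing Implicit Defensive.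
Import Order.TTheory GRing.Theory Num.Theory.

Ltac eval_comparisons := repeat (rewrite ?oddS /=; match goal with
| |- context [minn ?x ?y] =>
   (have -> : minn x y = x by lia) || (have -> : minn x y = y by lia)
| |- context [(?x <= ?y)%N] =>
   (have -> : (x <= y)%N = true by lia) || (have -> : (x <= y)%N = false by lia)
| |- context [(?x == ?y :> nat)] =>
   (have -> : (x == y) = true by lia) || (have -> : (x == y) = false by lia)
end).

Lemma big_addb_andl (I : Type) (r : seq I) (P : pred I) (k : bool) (F : I -> bool) :
  \big[addb/false]_(i <- r | P i) (k && F i) = k && \big[addb/false]_(i <- r | P i) F i.
Proof. by case: k => //=; rewrite big1. Qed.

Lemma big_addb_mkcond (T : finType) (P : pred T) (F : T -> bool) :
  \big[addb/false]_(t | P t) F t = \big[addb/false]_t (P t && F t).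
Proof. by rewrite big_mkcond; apply: eq_bigr => t _; case: (P t). Qed.

Lemma big_addb_pick (T : finType) (a : T) (F : T -> bool) :
  \big[addb/false]_t ((t == a) && F t) = F a.
Proof. by rewrite (bigD1 a) //= eqxx big1 ?addbF // => t /negbTE ->. Qed.

Lemma big_addb_nat_pick n q (F : nat -> bool) : (q < n)%N ->
  \big[addb/false]_(0 <= c < n) ((q == c) && F c) = F q.
Proof.
move=> lt_qn; rewrite (bigD1_seq q) ?mem_index_iota ?iota_uniq //= eqxx.
by rewrite big1 ?addbF // => c; rewrite eq_sym => /negbTE ->.
Qed.

Lemma big_addb_ltn n m : \big[addb/false]_(0 <= r < n) (r < m)%N = odd (minn n m).
Proof.
elim: n => [|n IHn]; first by rewrite big_nil min0n.
rewrite big_nat_recr //= IHn; case: (ltnP n m) => lt_nm.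
  have -> : minn n.+1 m = n.+1 by lia.
  by rewrite addbT.
have -> : minn n.+1 m = m by lia.
by rewrite addbF.
Qed.

Lemma ltn_lex_mulD n a b c d : (b < n)%N -> (d < n)%N ->
  (n * a + b < n * c + d)%N = (a < c)%N || (a == c) && (b < d)%N.
Proof.
move=> lt_bn lt_dn; case: (ltngtP a c) => lt_ac /=.
- have : (n * a.+1 <= n * c)%N by rewrite leq_mul2l lt_ac orbT.
  rewrite mulnS; lia.
- have : (n * c.+1 <= n * a)%N by rewrite leq_mul2l lt_ac orbT.
  rewrite mulnS; lia.
- by rewrite lt_ac ltn_add2l.
Qed.

(* Whether the bit of qubit (p, q) enters (U x)_(r, c); see [UmapE]. *)
Definition Ucoef (r c p q : nat) : bool :=
  (r <= p)%N && (if odd r then q == c else (c <= q)%N).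

Lemma big_addb_Ucoef_column n r p q p' q' : (q < n)%N -> (q' < n)%N ->
  \big[addb/false]_(0 <= c < n) (Ucoef r c p q && Ucoef r.+1 c p' q') =
  [&& (r <= p)%N, (r < p')%N & (if odd r then (q <= q')%N else (q' <= q)%N)].
Proof.
move=> lt_qn lt_q'n; rewrite /Ucoef oddS; case: (odd r) => /=.
  under eq_bigr do rewrite andbACA.
  by rewrite big_addb_andl big_addb_nat_pick // andbA.
under eq_bigr do rewrite andbACA [(_ <= q)%N && _]andbC.
by rewrite big_addb_andl big_addb_nat_pick // andbA.
Qed.

Lemma big_addb_row_pairs N a b (al be : bool) :
  \big[addb/false]_(0 <= r < N)
     ([&& (r <= a)%N, (r < b)%N & (if odd r then al else be)] (+)
      [&& (r <= b)%N, (r < a)%N & (if odd r then be else al)]) =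
  (odd (minn N (minn a b)) && (al (+) be))
    (+) [&& (a < b)%N, (a < N)%N & (if odd a then al else be)]
    (+) [&& (b < a)%N, (b < N)%N & (if odd b then be else al)].
Proof.
elim: N => [|N IHN]; first by rewrite big_nil min0n; eval_comparisons; rewrite /= ?andbF.
rewrite big_nat_recr //= IHN {IHN}.
case: (ltngtP N a) => ? ; case: (ltngtP N b) => ?; case: (ltngtP a b) => ?;
  try (exfalso; lia); try subst; eval_comparisons;
  rewrite /= ?andbF ?andbT ?addbF; try (by case: (odd _); case: al; case: be).
Qed.

Lemma mZ_mS_cross L (t j : site L) :
  (odd (minn t.1 j.1) && ((t.2 <= j.2)%N (+) (j.2 <= t.2)%N))
   (+) ((t.1 < j.1)%N && (if odd t.1 then (t.2 <= j.2)%N else (j.2 <= t.2)%N))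
   (+) ((j.1 < t.1)%N && (if odd j.1 then (j.2 <= t.2)%N else (t.2 <= j.2)%N))
  = (mZ t < mZ j)%N (+) (mS t < mS j)%N.
Proof.
rewrite /mZ /mS; case: t j => [[a lt_aL] [c lt_cL]] [[b lt_bL] [d lt_dL]] /=.
have snake r k : (if ~~ odd r then L * r + k else L * r + (L.-1 - k))%N =
                 (L * r + (if odd r then L.-1 - k else k))%N by case: (odd r).
have -> : ((if ~~ odd a then L * a + c else L * a + (L.-1 - c)) <
           (if ~~ odd b then L * b + d else L * b + (L.-1 - d)))%N =
          (a < b)%N || (a == b) && (if odd a then (d < c)%N else (c < d)%N).
  rewrite !snake ltn_lex_mulD; last 2 first.
  - by case: (odd a); lia.
  - by case: (odd b); lia.
  by case: (eqVneq a b) => [<-|] //=; case: (odd a); lia.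
rewrite ltn_lex_mulD; try lia.
have -> : (L.-1 - a < L.-1 - b)%N = (b < a)%N by lia.
case: (ltngtP a b) => ?; case: (ltngtP c d) => ?; try subst; eval_comparisons;
  rewrite /= ?andbF ?andbT ?addbF ?orbF ?orbT; try (by case: (odd _)).
Qed.

Section GridParity.
Variable L : nat.
Implicit Types (x y : basis L) (s t j : site L).

Definition flip y j : basis L := setbit y j (~~ y j).

Lemma flipE y j k : flip y j k = y k (+) (k == j).
Proof. by rewrite /flip /setbit ffunE; case: eqP => [->|]; rewrite ?addbT ?addbF. Qed.

Definition dotb y (f : site L -> bool) := \big[addb/false]_t (y t && f t).

Lemma dotbD y f g : dotb y f (+) dotb y g = dotb y (fun t => f t (+) g t).
Proof. by rewrite /dotb -big_split; apply: eq_bigr => t _; case: (y t). Qed.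

Lemma dotb_andr y f b : dotb y f && b = dotb y (fun t => f t && b).
Proof.
case: b; first by rewrite andbT; apply: eq_bigr => t _; rewrite andbT.
by rewrite andbF /dotb big1 // => t _; rewrite !andbF.
Qed.

Lemma dotb_andl y f b : b && dotb y f = dotb y (fun t => b && f t).
Proof. by rewrite andbC dotb_andr; apply: eq_bigr => t _; rewrite [b && _]andbC. Qed.

Lemma dotb_sum (I : finType) (P : pred I) y (F : I -> site L -> bool) :
  \big[addb/false]_(i | P i) dotb y (F i) =
  dotb y (fun t => \big[addb/false]_(i | P i) F i t).
Proof. by rewrite /dotb exchange_big; apply: eq_bigr => t _; rewrite big_addb_andl. Qed.

Lemma big_addb_prefix y (m : site L -> nat) j :
  \big[addb/false]_(k | (m k < m j)%N) y k = dotb y (fun t => (m t < m j)%N).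
Proof. by rewrite big_addb_mkcond; apply: eq_bigr => t _; rewrite andbC. Qed.

Definition Ucoef_site s t := Ucoef s.1 s.2 t.1 t.2.

Definition Umap x : basis L := Cleft_map (Cup_map x).

Lemma Cup_mapE x s : Cup_map x s = dotb x (fun t => (t.2 == s.2) && (s.1 <= t.1)%N).
Proof. by rewrite ffunE big_addb_mkcond; apply: eq_bigr => t _; rewrite andbC. Qed.

Lemma UmapE x s : Umap x s = dotb x (Ucoef_site s).
Proof.
rewrite /Umap /Cleft_map ffunE; case: ifP => odd_s.
  rewrite Cup_mapE /dotb; apply: eq_bigr => t _; congr (_ && _).
  by rewrite /Ucoef_site /Ucoef odd_s andbC.
rewrite big_addb_mkcond; under eq_bigr do rewrite Cup_mapE dotb_andl.
rewrite dotb_sum; apply: eq_bigr => t _; congr (_ && _).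
rewrite -(big_addb_pick (s.1, t.2) (fun=> Ucoef_site s t)).
apply: eq_bigr => -[i k] _; rewrite /Ucoef_site /Ucoef odd_s xpair_eqE /=.
case: (eqVneq i s.1) => [->|] //=; case: (eqVneq k t.2) => [->|_] /=.
  by rewrite andbC.
by rewrite andbF.
Qed.

Lemma Umap_flip x j s : Umap (flip x j) s = Umap x s (+) Ucoef_site s j.
Proof.
rewrite !UmapE /dotb -(big_addb_pick j (Ucoef_site s)) -big_split /=.
by apply: eq_bigr => t _; rewrite flipE; case: (x t); case: (t == j); case: (Ucoef_site s t).
Qed.

Definition below s : site L := (insubd s.1 s.1.+1, s.2).

Definition vpair s t := (t.2 == s.2) && (val t.1 == s.1.+1).

Lemma big_addb_vpair (F : site L -> site L -> bool) :
  \big[addb/false]_(s : site L) \big[addb/false]_(t | vpair s t) F s t =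
  \big[addb/false]_(s : site L) ((s.1.+1 < L)%N && F s (below s)).
Proof.
apply: eq_bigr => s _; case: (ltnP s.1.+1 L) => lt_sL /=.
  rewrite (eq_bigl (pred1 (below s))) ?big_pred1_eq // => -[i k].
  rewrite /vpair /below /= xpair_eqE andbC; congr (_ && _).
  by rewrite -val_eqE val_insubd lt_sL.
rewrite big_pred0 // => -[i k]; rewrite /vpair /=; apply/negbTE/negP => /andP[_ /eqP e].
by move: (ltn_ord i); rewrite e ltnNge lt_sL.
Qed.

Lemma big_addb_site (G : nat -> nat -> bool) :
  \big[addb/false]_(s : site L) G s.1 s.2 =
  \big[addb/false]_(0 <= r < L) \big[addb/false]_(0 <= c < L) G r c.
Proof.
rewrite -(pair_big xpredT xpredT (fun i k : 'I_L => G i k)) /= big_mkord.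
by apply: eq_bigr => i _; rewrite big_mkord.
Qed.

Lemma Ucoef_site_below s t : (s.1.+1 < L)%N ->
  Ucoef_site (below s) t = Ucoef s.1.+1 s.2 t.1 t.2.
Proof. by move=> lt_sL; rewrite /Ucoef_site /below /= val_insubd lt_sL. Qed.

Lemma vpair_Ucoef_diag j :
  \big[addb/false]_(s : site L) \big[addb/false]_(t | vpair s t) (Ucoef_site s j && Ucoef_site t j)
  = odd j.1.
Proof.
have lt_jL := ltn_ord j.1.
rewrite big_addb_vpair (eq_bigr (fun s : site L =>
    (s.1.+1 < L)%N && (Ucoef s.1 s.2 j.1 j.2 && Ucoef s.1.+1 s.2 j.1 j.2))); last first.
  by move=> s _; case: ltnP => //= ?; rewrite Ucoef_site_below.
rewrite (big_addb_site (fun r c => (r.+1 < L)%N && (Ucoef r c j.1 j.2 && Ucoef r.+1 c j.1 j.2))).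
rewrite (eq_bigr (fun r => (r < j.1)%N)); last first.
  by move=> r _; rewrite big_addb_andl big_addb_Ucoef_column // if_same leqnn andbT; lia.
by rewrite big_addb_ltn; have -> : minn L j.1 = j.1 by lia.
Qed.

Lemma vpair_Ucoef_cross j t :
  \big[addb/false]_(s : site L) \big[addb/false]_(u | vpair s u)
     ((Ucoef_site s t && Ucoef_site u j) (+) (Ucoef_site s j && Ucoef_site u t))
  = (mZ t < mZ j)%N (+) (mS t < mS j)%N.
Proof.
have lt_tL := ltn_ord t.1; have lt_jL := ltn_ord j.1.
set al := (t.2 <= j.2)%N; set be := (j.2 <= t.2)%N.
rewrite big_addb_vpair (eq_bigr (fun s : site L => (s.1.+1 < L)%N &&
   ((Ucoef s.1 s.2 t.1 t.2 && Ucoef s.1.+1 s.2 j.1 j.2) (+)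
    (Ucoef s.1 s.2 j.1 j.2 && Ucoef s.1.+1 s.2 t.1 t.2)))); last first.
  by move=> s _; case: ltnP => //= ?; rewrite !Ucoef_site_below.
rewrite (big_addb_site (fun r c => (r.+1 < L)%N &&
   ((Ucoef r c t.1 t.2 && Ucoef r.+1 c j.1 j.2) (+) (Ucoef r c j.1 j.2 && Ucoef r.+1 c t.1 t.2)))).
rewrite (eq_bigr (fun r =>
    [&& (r <= t.1)%N, (r < j.1)%N & (if odd r then al else be)] (+)
    [&& (r <= j.1)%N, (r < t.1)%N & (if odd r then be else al)])); last first.
  move=> r _; rewrite big_addb_andl big_split /= !big_addb_Ucoef_column //.
  by case: ltnP => //= ?; eval_comparisons; rewrite /= ?andbF.
rewrite big_addb_row_pairs -mZ_mS_cross lt_tL lt_jL.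
by have -> : minn L (minn t.1 j.1) = minn t.1 j.1 by lia.
Qed.

Definition vquad (u : basis L) :=
  \big[addb/false]_(s : site L) \big[addb/false]_(t | vpair s t) (u s && u t).

Definition Wsign y := (\big[addb/false]_(s : site L | odd s.1) y s) (+) vquad (Umap y).

Lemma vquad_Umap_flip y j :
  vquad (Umap (flip y j)) (+) vquad (Umap y) =
  dotb y (fun t => (mZ t < mZ j)%N (+) (mS t < mS j)%N) (+) odd j.1.
Proof.
rewrite /vquad -big_split /=.
transitivity (\big[addb/false]_(s : site L) \big[addb/false]_(t | vpair s t)
   (((Umap y s && Ucoef_site t j) (+) (Ucoef_site s j && Umap y t))
    (+) (Ucoef_site s j && Ucoef_site t j))).
  apply: eq_bigr => s _; rewrite -big_split /=; apply: eq_bigr => t _.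
  rewrite !Umap_flip.
  by case: (Umap y s); case: (Umap y t); case: (Ucoef_site s j); case: (Ucoef_site t j).
under eq_bigr do rewrite big_split /=.
rewrite big_split /= vpair_Ucoef_diag; congr (_ (+) _).
under eq_bigr do (under eq_bigr do rewrite !UmapE dotb_andr dotb_andl dotbD).
under eq_bigr do rewrite dotb_sum.
by rewrite dotb_sum; apply: eq_bigr => t _; rewrite vpair_Ucoef_cross.
Qed.

Lemma odd_rows_flip y j :
  (\big[addb/false]_(s : site L | odd s.1) flip y j s) (+)
  (\big[addb/false]_(s : site L | odd s.1) y s) = odd j.1.
Proof.
rewrite -big_split /= big_addb_mkcond -(big_addb_pick j (fun s : site L => odd s.1)).
by apply: eq_bigr => s _; rewrite flipE; case: (y s); case: (s == j); case: (odd s.1).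
Qed.

Lemma Wsign_flip y j :
  Wsign (flip y j) (+) Wsign y =
  (\big[addb/false]_(k | (mZ k < mZ j)%N) y k) (+) (\big[addb/false]_(k | (mS k < mS j)%N) y k).
Proof.
rewrite /Wsign addbACA odd_rows_flip vquad_Umap_flip !big_addb_prefix dotbD.
by rewrite addbC -addbA addbb addbF.
Qed.

End GridParity.

Section MonomialOperators.
Variable L : nat.
Local Open Scope ring_scope.
Implicit Types (f g : basis L -> basis L) (ph ps : basis L -> algC) (a b c t j : site L).

Definition monop f ph : op L := fun x y => (x == f y)%:R * ph y.

Lemma op_ext (A B : op L) : (forall x y, A x y = B x y) -> A = B.
Proof. by move=> eqAB; do 2 apply: functional_extensionality => ?; apply: eqAB. Qed.

Lemma eq_monop f g ph ps : f =1 g -> ph =1 ps -> monop f ph = monop g ps.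
Proof. by move=> eq_fg eq_phps; apply: op_ext => x y; rewrite /monop eq_fg eq_phps. Qed.

Lemma mulop_monop f g ph ps :
  mulop (monop f ph) (monop g ps) = monop (f \o g) (fun y => ph (g y) * ps y).
Proof.
apply: op_ext => x y; rewrite /mulop /monop (bigD1 (g y)) //= eqxx mul1r.
by rewrite big1 ?addr0 ?mulrA // => z /negbTE ->; rewrite mul0r mulr0.
Qed.

Lemma idop_monop : idop L = monop id (fun=> 1).
Proof. by apply: op_ext => x y; rewrite /monop mulr1. Qed.

Lemma permop_monop f : permop f = monop f (fun=> 1).
Proof. by apply: op_ext => x y; rewrite /monop mulr1. Qed.

Lemma adj_diag ph : adj (monop id ph) = monop id (fun y => (ph y)^*).
Proof.
apply: op_ext => x y; rewrite /adj /monop /= rmorphM /= conjC_nat.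
by case: (eqVneq x y) => [->|]; rewrite ?mul0r.
Qed.

Lemma conj_diag_perm f ps : injective f ->
  mulop (mulop (adj (permop f)) (monop id ps)) (permop f) = monop id (ps \o f).
Proof.
move=> inj_f; rewrite !permop_monop; apply: op_ext => x y; rewrite /mulop /adj /monop /=.
rewrite (eq_bigr (fun z => (z == f y)%:R * ((f x == f y)%:R * ps (f y)))); last first.
  move=> z _; rewrite (bigD1 z) //= eqxx mul1r big1 ?addr0; last first.
    by move=> w /negbTE ->; rewrite mul0r mulr0.
  rewrite !mulr1 conjC_nat.
  case: (eqVneq z (f y)) => [->|_]; last by rewrite /= !(mulr0n, mulr0, mul0r).
  by rewrite /= mulr1 mul1r eq_sym.
rewrite (bigD1 (f y)) //= eqxx mul1r big1 ?addr0 ?(inj_eq inj_f) //.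
by move=> z /negbTE ->; rewrite mul0r.
Qed.

Lemma big_mulop_diag (I : Type) (r : seq I) (P : pred I) (F : I -> basis L -> algC) :
  \big[@mulop L/idop L]_(i <- r | P i) monop id (F i) =
  monop id (fun y => \prod_(i <- r | P i) F i y).
Proof.
elim: r => [|i r IHr].
  by rewrite big_nil idop_monop; apply: eq_monop => // y; rewrite big_nil.
rewrite big_cons IHr; case: ifP => Pi.
  by rewrite mulop_monop; apply: eq_monop => // y; rewrite big_cons Pi.
by apply: eq_monop => // y; rewrite big_cons Pi.
Qed.

Lemma prod_sign_addb (I : Type) (r : seq I) (P : pred I) (b : I -> bool) :
  \prod_(i <- r | P i) ((-1) ^+ b i : algC) = (-1) ^+ (\big[addb/false]_(i <- r | P i) b i).
Proof.
apply: esym; apply: (big_morph (fun b : bool => ((-1) ^+ b : algC))) => //.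
by move=> ? ?; rewrite signr_addb.
Qed.

Lemma XopE j : Xop j = monop (fun y => flip y j) (fun=> 1).
Proof. by apply: op_ext => x y; rewrite /monop mulr1. Qed.

Lemma YopE j : Yop j = monop (fun y => flip y j) (fun y => if y j then - 'i else 'i).
Proof. by []. Qed.

Lemma ZopE j : Zop j = monop id (fun y => (-1) ^+ y j).
Proof. by []. Qed.

Lemma CZopE a b : CZop a b = monop id (fun y => (-1) ^+ (y a && y b)).
Proof. by []. Qed.

Lemma CNOTopE c t : CNOTop c t = permop (fun y => setbit y t (y t (+) y c)).
Proof. by []. Qed.

Lemma JWE (m : site L -> nat) j (b : bool) :
  JW m j b = monop (fun y => flip y j)
    (fun y => (if b then (if y j then - 'i else 'i) else 1) *
              (-1) ^+ (\big[addb/false]_(k | (m k < m j)%N) y k)).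
Proof.
rewrite /JW; under eq_bigr do rewrite ZopE.
rewrite big_mulop_diag; case: b; rewrite ?XopE ?YopE mulop_monop;
  by apply: eq_monop => // y; rewrite prod_sign_addb.
Qed.

End MonomialOperators.

Lemma perm_flatten_pairs (T U : eqType) (ts : seq U) (f g : U -> T) :
  perm_eq (flatten [seq [:: f s; g s] | s <- ts]) (map f ts ++ map g ts).
Proof.
elim: ts => //= s ts IHts; rewrite perm_cons perm_sym -[g s :: _]cat1s perm_catCA /=.
by rewrite perm_cons perm_sym.
Qed.

Lemma uniq_flatten_pairs (T : eqType) (ts : seq T) (f : T -> T) :
  uniq ts -> {in ts &, injective f} -> (forall s s', s \in ts -> s' \in ts -> f s != s') ->
  uniq (flatten [seq [:: f s; s] | s <- ts]).
Proof.
move=> uniq_ts inj_f f_ne; rewrite (perm_uniq (perm_flatten_pairs ts f id)) map_id.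
rewrite cat_uniq map_inj_in_uniq // uniq_ts andbT; apply/hasPn => s' ts_s'.
by apply/mapP => -[s ts_s e]; move: (f_ne s s' ts_s ts_s'); rewrite e eqxx.
Qed.

Lemma sumn_map_leq (T : Type) (s : seq T) (f : T -> nat) k :
  (forall x, f x <= k)%N -> (sumn (map f s) <= size s * k)%N.
Proof. by move=> le_fk; elim: s => //= x s IHs; rewrite mulSn leq_add. Qed.

Section CnotLadders.
Variable L : nat.
Local Open Scope ring_scope.

Definition sites : seq (site L) := enum {: site L}.

Lemma mem_filter_sites (P : pred (site L)) s : (s \in [seq t <- sites | P t]) = P s.
Proof. by rewrite mem_filter mem_enum andbT. Qed.

Lemma uniq_filter_sites (P : pred (site L)) : uniq [seq t <- sites | P t].
Proof. exact/filter_uniq/enum_uniq. Qed.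

Lemma big_addb_sites (P : pred (site L)) (F : site L -> bool) :
  \big[addb/false]_(s <- sites | P s) F s = \big[addb/false]_(s | P s) F s.
Proof. by rewrite /sites big_enum_cond; apply: eq_bigl => s; rewrite inE. Qed.

Definition circuit_step (A : op L) (l : seq (gate L)) : op L := mulop (layer_op l) A.

Lemma circuit_opE ls : circuit_op ls = foldl circuit_step (idop L) ls.
Proof. by []. Qed.

Lemma layer_op_cnots (ts : seq (site L)) (c : site L -> site L) :
  uniq ts -> (forall s, s \in ts -> c s \notin ts) ->
  layer_op [seq GCNOT (c s) s | s <- ts] =
  permop (fun y => [ffun k => if k \in ts then y k (+) y (c k) else y k]).
Proof.
rewrite /layer_op; elim: ts => [|s ts IHts] /=.
  move=> _ _; rewrite big_nil idop_monop permop_monop; apply: eq_monop => // y.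
  by apply/ffunP => k; rewrite ffunE.
move=> /andP[s_ts uniq_ts] c_out; rewrite big_cons IHts //; last first.
  by move=> t ts_t; move: (c_out t); rewrite !inE ts_t orbT negb_or => /(_ isT) /andP[].
have cs_ts : c s \notin ts by move: (c_out s); rewrite !inE eqxx negb_or => /(_ isT) /andP[].
rewrite /= CNOTopE !permop_monop mulop_monop; apply: eq_monop => y; last by rewrite mulr1.
apply/ffunP => k; rewrite /setbit /= !ffunE inE.
case: (eqVneq k s) => [->|] //=.
by rewrite (negbTE s_ts) (negbTE cs_ts).
Qed.

Lemma monop_circuit_step_diag (g : basis L -> basis L) ph ps l :
  layer_op l = monop id ps -> circuit_step (monop g ph) l = monop g (fun y => ps (g y) * ph y).
Proof. by rewrite /circuit_step => ->; rewrite mulop_monop. Qed.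

(* A family of CNOT ladders: [mk p o] is the p-th qubit of ladder o, and only the
   ladders o with [act o] are used. *)
Variables (mk : 'I_L -> 'I_L -> site L) (pos oth : site L -> 'I_L) (act : 'I_L -> bool).
Hypothesis mkK : forall s, mk (pos s) (oth s) = s.
Hypothesis posK : forall p o, pos (mk p o) = p.
Hypothesis othK : forall p o, oth (mk p o) = o.

Definition ladder_next s : site L := mk (insubd (pos s) (pos s).+1) (oth s).

Definition ladder_suffix (y : basis L) (o : 'I_L) (p : nat) :=
  \big[addb/false]_(i : 'I_L | (p <= i)%N) y (mk i o).

Definition ladders_from (p : nat) (y : basis L) : basis L :=
  [ffun s => if act (oth s) && (p <= pos s)%N then ladder_suffix y (oth s) (pos s) else y s].

Definition layer_map (p : nat) (y : basis L) : basis L :=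
  [ffun s => if act (oth s) && (pos s == p :> nat) then y s (+) y (ladder_next s) else y s].

Lemma pos_ladder_next s : ((pos s).+1 < L)%N -> pos (ladder_next s) = (pos s).+1 :> nat.
Proof. by move=> lt_sL; rewrite /ladder_next posK val_insubd lt_sL. Qed.

Lemma oth_ladder_next s : oth (ladder_next s) = oth s.
Proof. by rewrite /ladder_next othK. Qed.

Lemma ladder_suffixS y o (p : 'I_L) :
  ladder_suffix y o p = y (mk p o) (+) ladder_suffix y o p.+1.
Proof.
rewrite /ladder_suffix (bigD1 p) //=; congr (_ (+) _); apply: eq_bigl => i.
by rewrite -val_eqE /= [(p < i)%N]ltn_neqAle eq_sym andbC.
Qed.

Lemma ladder_suffix_end y o : ladder_suffix y o L = false.
Proof. by rewrite /ladder_suffix big_pred0 // => i; rewrite leqNgt ltn_ord. Qed.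

Lemma layer_map_ladders_from p y : (p.+1 < L)%N ->
  layer_map p (ladders_from p.+1 y) = ladders_from p y.
Proof.
move=> lt_pL; apply/ffunP => s; rewrite !ffunE.
case: (eqVneq (pos s : nat) p) => [pos_s|pos_s]; last first.
  by rewrite andbF [(p <= pos s)%N]leq_eqVlt eq_sym (negbTE pos_s).
rewrite andbT; case act_s: (act (oth s)) => //=.
have lt_sL : ((pos s).+1 < L)%N by rewrite pos_s.
rewrite oth_ladder_next act_s pos_ladder_next // pos_s ltnn !leqnn /=.
by rewrite -pos_s (ladder_suffixS _ _ (pos s)) mkK.
Qed.

Lemma ladders_from_last y : ladders_from L.-1 y = y.
Proof.
apply/ffunP => s; rewrite ffunE; case: ifP => // /andP[_ le_Ls].
have pos_s : (pos s).+1 = L by move: (ltn_ord (pos s)); lia.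
by rewrite (ladder_suffixS _ _ (pos s)) pos_s ladder_suffix_end addbF mkK.
Qed.

Lemma layer_mapK p : (p.+1 < L)%N -> involutive (layer_map p).
Proof.
move=> lt_pL y; apply/ffunP => s; rewrite !ffunE.
case: ifP => [/andP[act_s /eqP pos_s]|-> //].
have lt_sL : ((pos s).+1 < L)%N by rewrite pos_s.
rewrite act_s pos_s eqxx /= oth_ladder_next act_s pos_ladder_next // pos_s.
by rewrite (_ : (p.+1 == p) = false) /=; [rewrite -addbA addbb addbF | lia].
Qed.

Definition layers_map (X : seq nat) (y : basis L) := foldl (fun y p => layer_map p y) y X.

Lemma layers_map_revK X y : all (fun p => p.+1 < L)%N X -> layers_map (rev X) (layers_map X y) = y.
Proof.
elim: X y => [//|p X IHX] y /= /andP[lt_pL all_X].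
by rewrite rev_cons /layers_map foldl_rcons -/(layers_map _ _) IHX // layer_mapK.
Qed.

Definition ladder_schedule := rev (iota 0 L.-1).

Lemma ladder_schedule_lt : all (fun p => p.+1 < L)%N ladder_schedule.
Proof. by apply/allP => p; rewrite mem_rev mem_iota add0n; lia. Qed.

Lemma layers_map_schedule y : layers_map ladder_schedule y = ladders_from 0 y.
Proof.
have layers_iota n p : (p + n <= L.-1)%N ->
    layers_map (rev (iota p n)) (ladders_from (p + n) y) = ladders_from p y.
  elim: n p => [|n IHn] p le_pnL; first by rewrite addn0.
  rewrite /= rev_cons /layers_map foldl_rcons -/(layers_map _ _) -addSnnS IHn; last by lia.
  by rewrite layer_map_ladders_from //; lia.
by rewrite /ladder_schedule -{1}(ladders_from_last y) -(add0n L.-1) layers_iota.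
Qed.

Definition ladder_layer (p : nat) : seq (gate L) :=
  [seq GCNOT (ladder_next s) s | s <- sites & act (oth s) && (pos s == p :> nat)].

Lemma layer_op_ladder_layer p : (p.+1 < L)%N -> layer_op (ladder_layer p) = permop (layer_map p).
Proof.
move=> lt_pL; rewrite layer_op_cnots ?uniq_filter_sites //.
  congr permop; apply: functional_extensionality => y; apply/ffunP => k.
  by rewrite !ffunE mem_filter_sites.
move=> s; rewrite !mem_filter_sites => /andP[act_s /eqP pos_s].
have lt_sL : ((pos s).+1 < L)%N by rewrite pos_s.
by rewrite oth_ladder_next act_s pos_ladder_next // pos_s /=; lia.
Qed.

Lemma circuit_step_ladders X (g : basis L -> basis L) (ph : basis L -> algC) :
  all (fun p => p.+1 < L)%N X ->
  foldl circuit_step (monop g ph) (map ladder_layer X) = monop (layers_map X \o g) ph.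
Proof.
elim: X g => [|p X IHX] g /=; first by move=> _; apply: eq_monop.
move=> /andP[lt_pL all_X].
have -> : circuit_step (monop g ph) (ladder_layer p) = monop (layer_map p \o g) ph.
  rewrite /circuit_step layer_op_ladder_layer // permop_monop mulop_monop.
  by apply: eq_monop => // y; rewrite mul1r.
by rewrite IHX.
Qed.

Hypothesis adjacent_next : forall s, ((pos s).+1 < L)%N -> adjacent (ladder_next s) s.

Lemma ladder_layer_ok p : (p.+1 < L)%N -> layer_ok (ladder_layer p).
Proof.
move=> lt_pL; apply/andP; split.
  rewrite all_map; apply/allP => s; rewrite mem_filter_sites => /andP[_ /eqP pos_s].
  by apply: adjacent_next; rewrite pos_s.
rewrite -map_comp; apply: uniq_flatten_pairs; first exact: uniq_filter_sites.
  move=> s s'; rewrite !mem_filter_sites => /andP[_ /eqP pos_s] /andP[_ /eqP pos_s'] e.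
  rewrite -(mkK s) -(mkK s'); move: (congr1 oth e); rewrite !oth_ladder_next => ->.
  by congr mk; apply: val_inj; rewrite /= pos_s pos_s'.
move=> s s'; rewrite !mem_filter_sites => /andP[_ /eqP pos_s] /andP[_ /eqP pos_s'].
apply/eqP => /(congr1 (fun t => pos t : nat)).
by rewrite pos_ladder_next pos_s ?pos_s'; lia.
Qed.

Lemma size_ladder_layer p : (size (ladder_layer p) <= L)%N.
Proof.
rewrite size_map -(size_map oth) -[X in (_ <= X)%N]card_ord cardE.
apply: uniq_leq_size => [|o _]; last by rewrite mem_enum.
rewrite map_inj_in_uniq ?uniq_filter_sites //.
move=> s s'; rewrite !mem_filter_sites => /andP[_ /eqP pos_s] /andP[_ /eqP pos_s'] e.
by rewrite -(mkK s) -(mkK s') e; congr mk; apply: val_inj; rewrite /= pos_s pos_s'.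
Qed.

End CnotLadders.

Arguments circuit_step {L}.

Section GridLadders.
Variable L : nat.

Definition col_site (p o : 'I_L) : site L := (p, o).
Definition row_site (p o : 'I_L) : site L := (o, p).
Definition even_row (o : 'I_L) := ~~ odd o.

Lemma col_siteK (s : site L) : col_site s.1 s.2 = s. Proof. by case: s. Qed.
Lemma row_siteK (s : site L) : row_site s.2 s.1 = s. Proof. by case: s. Qed.
Lemma col_site_fst p o : (col_site p o).1 = p. Proof. by []. Qed.
Lemma col_site_snd p o : (col_site p o).2 = o. Proof. by []. Qed.
Lemma row_site_snd p o : (row_site p o).2 = p. Proof. by []. Qed.
Lemma row_site_fst p o : (row_site p o).1 = o. Proof. by []. Qed.

Definition Cup_layers := map (ladder_layer col_site fst snd xpredT) (ladder_schedule L).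
Definition Cleft_layers := map (ladder_layer row_site snd fst even_row) (ladder_schedule L).
Definition Cup_layers_map := layers_map col_site fst snd xpredT.
Definition Cleft_layers_map := layers_map row_site snd fst even_row.

Lemma Cup_layers_mapE y : Cup_layers_map (ladder_schedule L) y = Cup_map y.
Proof.
rewrite /Cup_layers_map (layers_map_schedule xpredT col_siteK col_site_fst col_site_snd).
apply/ffunP => s; rewrite !ffunE /= /ladder_suffix.
rewrite (eq_bigr (fun i => \big[addb/false]_(k : 'I_L | k == s.2) y (i, k))); last first.
  by move=> i _; rewrite big_pred1_eq.
rewrite (pair_big_dep _ _ (fun i k => y (i, k))).
by apply: eq_big => [[i k]|[i k] _] //=; rewrite andbC.
Qed.

Lemma Cleft_layers_mapE y : Cleft_layers_map (ladder_schedule L) y = Cleft_map y.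
Proof.
rewrite /Cleft_layers_map (layers_map_schedule even_row row_siteK row_site_snd row_site_fst).
apply/ffunP => s; rewrite !ffunE /even_row /=; case: (odd s.1) => //=.
rewrite /ladder_suffix (eq_bigr (fun i => \big[addb/false]_(k : 'I_L | k == s.1) y (k, i)));
  last by move=> i _; rewrite big_pred1_eq.
rewrite exchange_big (pair_big_dep _ _ (fun i k => y (i, k))).
by apply: eq_big => [[i k]|[i k] _].
Qed.

Lemma layers_map_Umap y :
  Cleft_layers_map (ladder_schedule L) (Cup_layers_map (ladder_schedule L) y) = Umap y.
Proof. by rewrite Cup_layers_mapE Cleft_layers_mapE. Qed.

Lemma Umap_layersK y :
  Cup_layers_map (rev (ladder_schedule L))
    (Cleft_layers_map (rev (ladder_schedule L)) (Umap y)) = y.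
Proof.
rewrite -layers_map_Umap /Cup_layers_map /Cleft_layers_map.
rewrite (layers_map_revK even_row row_site_snd row_site_fst) ?ladder_schedule_lt //.
by rewrite (layers_map_revK xpredT col_site_fst col_site_snd) ?ladder_schedule_lt.
Qed.

Lemma Umap_inj : injective (@Umap L).
Proof. by move=> x x' e; rewrite -(Umap_layersK x) -(Umap_layersK x') e. Qed.

Lemma adjacent_col_next (s : site L) :
  ((s.1 : nat).+1 < L)%N -> adjacent (ladder_next col_site fst snd s) s.
Proof.
move=> lt_sL; rewrite /adjacent /ladder_next /col_site /= val_insubd lt_sL.
by rewrite distnn distnEl ?leqnSn // subSnn.
Qed.

Lemma adjacent_row_next (s : site L) :
  ((s.2 : nat).+1 < L)%N -> adjacent (ladder_next row_site snd fst s) s.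
Proof.
move=> lt_sL; rewrite /adjacent /ladder_next /row_site /= val_insubd lt_sL.
by rewrite distnn distnEl ?leqnSn // subSnn.
Qed.

Lemma circuit_step_U_layers (g : basis L -> basis L) (ph : basis L -> algC) :
  foldl circuit_step (monop g ph) (Cup_layers ++ Cleft_layers) = monop (@Umap L \o g) ph.
Proof.
rewrite foldl_cat (circuit_step_ladders xpredT col_site_fst col_site_snd) ?ladder_schedule_lt //.
rewrite (circuit_step_ladders even_row row_site_snd row_site_fst) ?ladder_schedule_lt //.
by apply: eq_monop => // y; apply: layers_map_Umap.
Qed.

Lemma circuit_step_Uinv_layers (g : basis L -> basis L) (ph : basis L -> algC) :
  foldl circuit_step (monop (@Umap L \o g) ph) (rev Cleft_layers ++ rev Cup_layers) = monop g ph.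
Proof.
rewrite foldl_cat /Cleft_layers /Cup_layers -!map_rev.
have rev_schedule_lt : all (fun p => p.+1 < L)%N (rev (ladder_schedule L)).
  by rewrite all_rev ladder_schedule_lt.
rewrite (circuit_step_ladders even_row row_site_snd row_site_fst) //.
rewrite (circuit_step_ladders xpredT col_site_fst col_site_snd) //.
by apply: eq_monop => // y; apply: Umap_layersK.
Qed.

Lemma Cup_layers_ok : all (@layer_ok L) Cup_layers.
Proof.
rewrite all_map; apply/allP => p; rewrite mem_rev mem_iota add0n => lt_p /=.
by apply: (ladder_layer_ok xpredT col_siteK col_site_fst col_site_snd adjacent_col_next); lia.
Qed.

Lemma Cleft_layers_ok : all (@layer_ok L) Cleft_layers.
Proof.
rewrite all_map; apply/allP => p; rewrite mem_rev mem_iota add0n => lt_p /=.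
by apply: (ladder_layer_ok even_row row_siteK row_site_snd row_site_fst adjacent_row_next); lia.
Qed.

Lemma circuit_size_Cup_layers : (circuit_size Cup_layers <= L.-1 * L)%N.
Proof.
rewrite /circuit_size -map_comp -(size_iota 0 L.-1) -size_rev.
exact: sumn_map_leq (size_ladder_layer xpredT col_siteK).
Qed.

Lemma circuit_size_Cleft_layers : (circuit_size Cleft_layers <= L.-1 * L)%N.
Proof.
rewrite /circuit_size -map_comp -(size_iota 0 L.-1) -size_rev.
exact: sumn_map_leq (size_ladder_layer even_row row_siteK).
Qed.

End GridLadders.

Section WopDiagonal.
Variable L : nat.
Local Open Scope ring_scope.

Lemma UopE : Uop L = permop (@Umap L).
Proof.
rewrite /Uop /Cleft /Cup !permop_monop mulop_monop.
by apply: eq_monop => // y; rewrite mulr1.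
Qed.

Lemma WopE : Wop L = monop id (fun y => (-1) ^+ Wsign y).
Proof.
rewrite /Wop /Zodd /C2D UopE /CZlayer.
under eq_bigr do rewrite ZopE.
rewrite big_mulop_diag.
under eq_bigr do (under eq_bigr do rewrite CZopE; rewrite big_mulop_diag).
rewrite big_mulop_diag conj_diag_perm; last exact: Umap_inj.
rewrite mulop_monop; apply: eq_monop => // y /=.
rewrite /Wsign signr_addb prod_sign_addb; congr (_ * _).
by under eq_bigr do rewrite prod_sign_addb; rewrite prod_sign_addb.
Qed.

Lemma conj_Wop f ph :
  mulop (mulop (Wop L) (monop f ph)) (adj (Wop L)) =
  monop f (fun y => (-1) ^+ (Wsign (f y) (+) Wsign y) * ph y).
Proof.
rewrite WopE adj_diag !mulop_monop; apply: eq_monop => // y /=.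
by rewrite rmorph_sign signr_addb mulrAC.
Qed.

Lemma Wop_maps_encoding (m m' : site L -> nat) :
  (forall y j, Wsign (flip y j) (+) Wsign y =
     (\big[addb/false]_(k | (m k < m j)%N) y k) (+) (\big[addb/false]_(k | (m' k < m' j)%N) y k)) ->
  maps_encoding (Wop L) m m'.
Proof.
move=> Wsign_prefix j b; rewrite !JWE conj_Wop; apply: eq_monop => // y.
by rewrite Wsign_prefix mulrCA -signr_addb addbAC addbb addFb.
Qed.

End WopDiagonal.

Section WCircuit.
Variable L : nat.
Local Open Scope ring_scope.
Implicit Types (g : basis L -> basis L) (ph : basis L -> algC).

Definition CZ_site (par : bool) (s : site L) := ((s.1 : nat).+1 < L)%N && (odd s.1 == par).
Definition CZ_layer par : seq (gate L) :=
  [seq GCZ (below s) s | s : site L <- sites L & CZ_site par s].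
Definition Zodd_layer : seq (gate L) := [seq GZ s | s : site L <- sites L & odd s.1].

Definition W_circuit :=
  Cup_layers L ++ Cleft_layers L ++ [:: CZ_layer false; CZ_layer true] ++
  rev (Cleft_layers L) ++ rev (Cup_layers L) ++ [:: Zodd_layer].

Lemma layer_op_CZ_layer par : layer_op (CZ_layer par) =
  monop id (fun y => (-1) ^+ (\big[addb/false]_(s | CZ_site par s) (y (below s) && y s))).
Proof.
rewrite /layer_op big_map big_filter; under eq_bigr do rewrite /= CZopE.
by rewrite big_mulop_diag; apply: eq_monop => // y; rewrite prod_sign_addb big_addb_sites.
Qed.

Lemma layer_op_Zodd_layer :
  layer_op Zodd_layer = monop id (fun y => (-1) ^+ (\big[addb/false]_(s : site L | odd s.1) y s)).
Proof.
rewrite /layer_op big_map big_filter; under eq_bigr do rewrite /= ZopE.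
by rewrite big_mulop_diag; apply: eq_monop => // y; rewrite prod_sign_addb big_addb_sites.
Qed.

Lemma CZ_layers_vquad (u : basis L) :
  (\big[addb/false]_(s | CZ_site false s) (u (below s) && u s)) (+)
  (\big[addb/false]_(s | CZ_site true s) (u (below s) && u s)) = vquad u.
Proof.
rewrite /vquad big_addb_vpair (big_addb_mkcond (CZ_site false)) (big_addb_mkcond (CZ_site true)).
rewrite -big_split /=; apply: eq_bigr => s _.
by rewrite /CZ_site; case: (odd s.1); case: (_ < L)%N; case: (u s); case: (u (below s)).
Qed.

Lemma W_circuitE : circuit_op W_circuit = Wop L.
Proof.
rewrite circuit_opE /W_circuit catA foldl_cat idop_monop circuit_step_U_layers /=.
rewrite !(monop_circuit_step_diag _ _ (layer_op_CZ_layer _)) catA foldl_cat.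
rewrite circuit_step_Uinv_layers /=.
rewrite (monop_circuit_step_diag _ _ layer_op_Zodd_layer) WopE; apply: eq_monop => // y /=.
by rewrite mulr1 -!signr_addb /Wsign -CZ_layers_vquad [X in _ (+) X]addbC.
Qed.

Lemma CZ_layer_ok par : layer_ok (CZ_layer par).
Proof.
apply/andP; split.
  rewrite all_map; apply/allP => s; rewrite mem_filter_sites => /andP[lt_sL _].
  exact: adjacent_col_next.
rewrite -map_comp; apply: uniq_flatten_pairs; first exact: uniq_filter_sites.
  move=> [i k] [i' k']; rewrite !mem_filter_sites => /andP[lt_iL _] /andP[lt_i'L _] /=.
  case; rewrite /below /= => /(congr1 val); rewrite !val_insubd lt_iL lt_i'L => -[e] ->.
  by congr pair; apply: val_inj.
move=> s s'; rewrite !mem_filter_sites => /andP[lt_sL /eqP odd_s] /andP[_ /eqP odd_s'].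
apply/eqP => /(congr1 (fun t : site L => odd t.1)); rewrite /= val_insubd lt_sL /=.
by rewrite odd_s odd_s'; case: par {odd_s odd_s'}.
Qed.

Lemma Zodd_layer_ok : layer_ok Zodd_layer.
Proof.
apply/andP; split; first by rewrite all_map; apply/allP.
by rewrite -map_comp /comp /= flatten_map1 map_id uniq_filter_sites.
Qed.

Lemma W_circuit_ok : all (@layer_ok L) W_circuit.
Proof.
rewrite /W_circuit !all_cat !all_rev Cup_layers_ok Cleft_layers_ok /=.
by rewrite !CZ_layer_ok Zodd_layer_ok.
Qed.

Lemma size_W_circuit : (size W_circuit <= 7 * L.+1)%N.
Proof. by rewrite /W_circuit !size_cat !size_rev !size_map size_rev size_iota /=; lia. Qed.

Lemma circuit_size_W_circuit : (circuit_size W_circuit <= 7 * (L * L).+1)%N.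
Proof.
have size_filter_sites (P : pred (site L)) : (size [seq t <- sites L | P t] <= L * L)%N.
  by rewrite size_filter (leq_trans (count_size _ _)) // -cardE card_prod !card_ord.
have := circuit_size_Cup_layers L; have := circuit_size_Cleft_layers L.
have := size_filter_sites (CZ_site false); have := size_filter_sites (CZ_site true).
have := size_filter_sites (fun s => odd s.1).
have : (L.-1 * L <= L * L)%N by rewrite leq_mul2r leq_pred orbT.
rewrite /circuit_size /W_circuit !map_cat !sumn_cat !map_rev !sumn_rev /= !size_map; lia.
Qed.

End WCircuit.

Theorem mainTheorem4 :
  (forall L : nat,
     maps_encoding (Wop L) (@mZ L) (@mS L) /\
     maps_encoding (Wop L) (@mS L) (@mZ L)) /\
  (exists c_size c_depth : nat, forall L : nat,
     exists ls : seq (seq (gate L)),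
       all (@layer_ok L) ls /\
       (size ls <= c_depth * L.+1)%N /\
       (circuit_size ls <= c_size * (L * L).+1)%N /\
       circuit_op ls = Wop L).
Proof.
split=> [L|].
  by split; apply: Wop_maps_encoding => y j; rewrite Wsign_flip // addbC.
exists 7, 7 => L; exists (W_circuit L).
split; first exact: W_circuit_ok.
split; first exact: size_W_circuit.
split; first exact: circuit_size_W_circuit.
exact: W_circuitE.
Qed.
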